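(* Let $L\in\{0,1\}$, $X$, $T^{k-1}$ and $T_k$ be jointly distributed discrete random variables with finite supports such that, for every value $t^{k-1}$ of $T^{k-1}$ with positive probability, conditioned on $T^{k-1}=t^{k-1}$ and $L=0$ the message $T_k$ is independent of $X$. Assume $\Pr(L=0\mid X=x,T^{k-1}=t^{k-1})>0$ whenever $\Pr(X=x,T^{k-1}=t^{k-1})>0$. Writing $T^k=(T^{k-1},T_k)$, \[ I(X;T_k\mid T^{k-1})\le \mathrm{susp}(X,T^k)-\mathrm{susp}(X,T^{k-1}). \]
   Context: All logarithms are base $2$. For a random variable $Y$ (possibly a tuple of random variables) jointly distributed with $L\in\{0,1\}$ and a value $y$ with $\Pr(Y=y)>0$, the suspicion given $Y=y$ is $\mathrm{susp}(Y=y)=-\log\Pr(L=0\mid Y=y)\in[0,\infty]$, and the suspicion given $Y$ is $\mathrm{susp}(Y)=\sum_{y}\Pr(Y=y)\,\mathrm{susp}(Y=y)$. Here $T^{k-1}$ plays the role of a previous transcript and $T_k$ of the next message, sent by a player whose leaking indicator is $L$. $I(X;T_k\mid T^{k-1})$ is conditional mutual information. *)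

From mathcomp Require Import all_boot.
From Stdlib Require Import Reals.

Set Implicit Arguments.
Unset Strict Implicit.
Unset Printing Implicit Defensive.

Local Open Scope R_scope.

Definition log2 (x : R) : R := ln x / ln 2.

(* Extended nonnegative-valued reals for suspicion (which lies in [0, oo]). *)
Inductive ER : Type := Fin (r : R) | PInf.

Definition ER_plus (a b : ER) : ER :=
  match a, b with Fin x, Fin y => Fin (x + y) | _, _ => PInf end.

(* a - b; only used with b finite (b = PInf gives a junk value). *)
Definition ER_sub (a b : ER) : ER :=
  match a, b with
  | Fin x, Fin y => Fin (x - y)
  | PInf, Fin _ => PInf
  | _, PInf => Fin 0
  end.

Definition ER_le (a b : ER) : Prop :=
  match a, b with
  | Fin x, Fin y => x <= y
  | _, PInf => True
  | PInf, Fin _ => False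
  end.

Definition ER_scale (c : R) (a : ER) : ER :=
  match a with Fin x => Fin (c * x) | PInf => PInf end.

Section Prob.
(* Sample space: values of (L, X, T^{k-1}, T_k), with L = 0 encoded as false. *)
Variables (X T M : finType).
Definition Omega := (bool * X * T * M)%type.

Definition rvL (w : Omega) : bool := w.1.1.1.
Definition rvX (w : Omega) : X := w.1.1.2.
Definition rvT (w : Omega) : T := w.1.2.
Definition rvM (w : Omega) : M := w.2.

Definition is_pmf (p : Omega -> R) : Prop :=
  (forall w, 0 <= p w) /\ \big[Rplus/0]_(w : Omega) p w = 1.

Definition Pr (p : Omega -> R) (E : pred Omega) : R :=
  \big[Rplus/0]_(w : Omega | E w) p w.

Definition cPr (p : Omega -> R) (A B : pred Omega) : R :=
  Pr p (fun w => A w && B w) / Pr p B.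

Definition PrL0given (p : Omega -> R) (Y : finType) (f : Omega -> Y) (y : Y) : R :=
  cPr p (fun w => ~~ rvL w) (fun w => f w == y).

Definition susp_at (p : Omega -> R) (Y : finType) (f : Omega -> Y) (y : Y) : ER :=
  if Rlt_dec 0 (PrL0given p f y) then Fin (- log2 (PrL0given p f y)) else PInf.

Definition susp (p : Omega -> R) (Y : finType) (f : Omega -> Y) : ER :=
  \big[ER_plus/Fin 0]_(y : Y)
     (if Rlt_dec 0 (Pr p (fun w => f w == y))
      then ER_scale (Pr p (fun w => f w == y)) (susp_at p f y)
      else Fin 0).

Definition cond_mutual_info (p : Omega -> R) : R :=
  \big[Rplus/0]_(v : (X * T * M)%type)
    let: (x, t, m) := v in
    let pxtm := Pr p (fun w => (rvX w == x) && (rvT w == t) && (rvM w == m)) in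
    let pt   := Pr p (fun w => rvT w == t) in
    let pxt  := Pr p (fun w => (rvX w == x) && (rvT w == t)) in
    let ptm  := Pr p (fun w => (rvT w == t) && (rvM w == m)) in
    if Rlt_dec 0 pxtm then pxtm * log2 (pxtm * pt / (pxt * ptm)) else 0.

End Prob.

(* Write q(x,t,m) = Pr(X=x, T^{k-1}=t, T_k=m) and mark with a 0 the same
   probabilities intersected with the event L = 0.  If some (x,t,m) has
   q > 0 but q0 = 0, then susp(X,T^k) is infinite and there is nothing to
   prove.  Otherwise all three quantities are q-weighted sums over the
   support of q, and pointwise (using independence of X and T_k given
   T^{k-1}, L = 0)
     -log(q0/q) = -log(q0(x,t)/q(x,t)) + log(q q(t)/(q(x,t) q(t,m))) + log(q/r)
   with the sub-probability r(x,t,m) = q(t) q0(m|t) q(x|t,m).  Hence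
   susp(X,T^k) - susp(X,T^{k-1}) - I(X;T_k|T^{k-1}) = KL(q || r) >= 0 by
   Gibbs' inequality. *)

From HB Require Import structures.
From mathcomp Require Import all_boot.
From Stdlib Require Import Reals Lra Classical.
Local Open Scope R_scope.

Lemma Rplus_associative : associative Rplus.
Proof. by move=> x y z; rewrite Rplus_assoc. Qed.
HB.instance Definition _ :=
  Monoid.isComLaw.Build R 0 Rplus Rplus_associative Rplus_comm Rplus_0_l.

Lemma sum_ge0 {I : finType} (F : I -> R) :
  (forall i, 0 <= F i) -> 0 <= \big[Rplus/0]_i F i.
Proof.
by move=> F_ge0; apply: (big_ind (fun x => 0 <= x)) => [|x y|i _]; [lra|lra|].
Qed.

Lemma sum_le {I : finType} (F G : I -> R) :
  (forall i, F i <= G i) -> \big[Rplus/0]_i F i <= \big[Rplus/0]_i G i.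
Proof.
move=> FG.
by apply: (big_ind2 (fun x y => x <= y)) => [|x1 x2 y1 y2|i _]; [lra|lra|].
Qed.

Lemma term_le_sum {I : finType} (F : I -> R) (i : I) :
  (forall j, 0 <= F j) -> F i <= \big[Rplus/0]_j F j.
Proof.
move=> F_ge0; rewrite (bigD1 i) //=.
have : 0 <= \big[Rplus/0]_(j | j != i) F j.
  by apply: (big_ind (fun x => 0 <= x)) => [|x y|j _]; [lra|lra|].
lra.
Qed.

Lemma sum_mulr {I : finType} (c : R) (F : I -> R) :
  \big[Rplus/0]_i (c * F i) = c * \big[Rplus/0]_i F i.
Proof.
apply: (big_rec2 (fun x y => x = c * y)); first by rewrite Rmult_0_r.
by move=> i y1 y2 _ ->; rewrite Rmult_plus_distr_l.
Qed.

Lemma sum_triple {I J K : finType} (F : I * J * K -> R) :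
  \big[Rplus/0]_(v : I * J * K) F v =
  \big[Rplus/0]_j \big[Rplus/0]_k \big[Rplus/0]_i F (i, j, k).
Proof.
rewrite [RHS](eq_bigr (fun j => \big[Rplus/0]_i \big[Rplus/0]_k F (i, j, k)));
  last by move=> j _; rewrite exchange_big.
rewrite exchange_big !pair_big /=.
by apply: eq_bigr => [[[i j] k]].
Qed.

Lemma sum_reassoc {I J K : finType} (F : I * (J * K) -> R) :
  \big[Rplus/0]_(y : I * (J * K)) F y =
  \big[Rplus/0]_(v : I * J * K) F (v.1.1, (v.1.2, v.2)).
Proof.
apply: (reindex (fun v : I * J * K => (v.1.1, (v.1.2, v.2)))).
by exists (fun y => (y.1, y.2.1, y.2.2)) => [[[i j] k]|[i [j k]]].
Qed.

(* With the convention / 0 = 0, a ratio x / x is 1 or 0. *)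
Lemma div_self_bounds (x : R) : 0 <= x / x <= 1.
Proof.
have [->|x_neq0] := Req_dec x 0; first by rewrite /Rdiv Rmult_0_l; lra.
by rewrite /Rdiv Rinv_r //; lra.
Qed.

Lemma ln2_pos : 0 < ln 2.
Proof. have := ln_lt_2; lra. Qed.

Lemma div_ge0 (a b : R) : 0 <= a -> 0 <= b -> 0 <= a / b.
Proof.
move=> a_ge0 b_ge0; have [->|b_neq0] := Req_dec b 0.
  by rewrite /Rdiv Rinv_0 Rmult_0_r; lra.
by apply: Rmult_le_pos => //; apply: Rlt_le; apply: Rinv_0_lt_compat; lra.
Qed.

Lemma ln_le_sub1 (y : R) : 0 < y -> ln y <= y - 1.
Proof. by move=> y_gt0; have := exp_ineq1_le (ln y); rewrite exp_ln //; lra. Qed.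

Lemma log2_mult (a b : R) : 0 < a -> 0 < b -> log2 (a * b) = log2 a + log2 b.
Proof.
by move=> a_gt0 b_gt0; rewrite /log2 ln_mult //; field; have := ln2_pos; lra.
Qed.

Lemma log2_inv_ratio (a b : R) : 0 < a -> 0 < b -> - log2 (a / b) = log2 (b / a).
Proof.
move=> a_gt0 b_gt0.
have ba : b / a = / (a / b) by field; lra.
rewrite ba /log2 ln_Rinv; last exact: Rdiv_lt_0_compat.
by rewrite /Rdiv Ropp_mult_distr_l.
Qed.

(* wsum a F: the sum of a i * F i over the support {i | a i > 0} of a. All
   suspicions and the mutual information are of this form. *)
Definition wsum {I : finType} (a F : I -> R) : R :=
  \big[Rplus/0]_i (if Rlt_dec 0 (a i) then a i * F i else 0).

Lemma wsum_eq {I : finType} (a a' F F' : I -> R) :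
  (forall i, a i = a' i) -> (forall i, 0 < a i -> F i = F' i) ->
  wsum a F = wsum a' F'.
Proof.
move=> aa' FF'; apply: eq_bigr => i _; rewrite -aa'.
by case: Rlt_dec => // a_gt0; rewrite FF'.
Qed.

Lemma wsum_add {I : finType} (a F G : I -> R) :
  wsum a (fun i => F i + G i) = wsum a F + wsum a G.
Proof.
rewrite /wsum -big_split; apply: eq_bigr => i _.
by case: Rlt_dec => _ /=; ring.
Qed.

Lemma wsum_marginal {I J : finType} (a : I -> R) (w : I * J -> R) (g : I -> R) :
  (forall v, 0 <= w v) -> (forall i, a i = \big[Rplus/0]_j w (i, j)) ->
  wsum a g = wsum w (fun v => g v.1).
Proof.
move=> w_ge0 a_marg.
transitivity (\big[Rplus/0]_i \big[Rplus/0]_j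
                (if Rlt_dec 0 (w (i, j)) then w (i, j) * g i else 0));
  last by rewrite pair_big; apply: eq_bigr => [[i j]].
apply: eq_bigr => i _; rewrite a_marg; case: Rlt_dec => [a_gt0|a_le0] /=.
- rewrite Rmult_comm -sum_mulr; apply: eq_bigr => j _.
  case: Rlt_dec => [w_gt0|w_le0] /=; first by rewrite Rmult_comm.
  have -> : w (i, j) = 0 by have := w_ge0 (i, j); lra.
  by rewrite Rmult_0_r.
- rewrite big1 // => j _; case: Rlt_dec => // w_gt0; exfalso; apply: a_le0.
  apply: Rlt_le_trans w_gt0 _.
  exact: (term_le_sum (fun k => w (i, k)) j (fun k => w_ge0 (i, k))).
Qed.

Lemma gibbs {I : finType} (a b : I -> R) :
  (forall i, 0 <= b i) -> (forall i, 0 < a i -> 0 < b i) ->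
  \big[Rplus/0]_i b i <= \big[Rplus/0]_i a i ->
  0 <= wsum a (fun i => log2 (a i / b i)).
Proof.
move=> b_ge0 b_gt0 sum_ba.
have inv_ln2 := Rinv_0_lt_compat _ ln2_pos.
have termwise i : / ln 2 * a i + - / ln 2 * b i <=
    (if Rlt_dec 0 (a i) then a i * log2 (a i / b i) else 0).
  have := b_ge0 i; case: Rlt_dec => [a_gt0|/Rnot_lt_le a_le0] b_i_ge0 /=;
    last by nra.
  have b_i_gt0 := b_gt0 i a_gt0.
  have ln_bound : a i * ln (b i / a i) <= b i - a i.
    apply: (Rle_trans _ (a i * (b i / a i - 1))).
      by apply: Rmult_le_compat_l; [lra | apply: ln_le_sub1; apply: Rdiv_lt_0_compat].
    by right; field; lra.
  rewrite -log2_inv_ratio // /log2 /Rdiv; nra.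
apply: Rle_trans (sum_le _ _ termwise).
by rewrite big_split /= !sum_mulr; nra.
Qed.

Lemma ER_sum_fin {I : finType} (F : I -> ER) (G : I -> R) :
  (forall i, F i = Fin (G i)) ->
  \big[ER_plus/Fin 0]_i F i = Fin (\big[Rplus/0]_i G i).
Proof.
move=> FG; rewrite (@big_morph _ _ Fin (Fin 0) ER_plus 0 Rplus) //.
by apply: eq_bigr => i _; rewrite FG.
Qed.

Lemma ER_sum_inf {I : finType} (F : I -> ER) (i0 : I) :
  F i0 = PInf -> \big[ER_plus/Fin 0]_i F i = PInf.
Proof.
move=> F_i0; rewrite unlock /=.
have : i0 \in index_enum I by rewrite mem_index_enum.
elim: (index_enum I) => //= i r IH; rewrite in_cons => /orP [/eqP <-|/IH ->].
  by rewrite F_i0.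
by case: (F i).
Qed.

Section Probability.
Context {X T M : finType} {p : Omega X T M -> R}.

Lemma Pr_ext (E E' : pred (Omega X T M)) :
  (forall w, E w = E' w) -> Pr p E = Pr p E'.
Proof. by move=> EE'; apply: eq_bigl. Qed.

Lemma susp_finite {Y : finType} (f : Omega X T M -> Y) :
  (forall y, 0 < Pr p (fun w => f w == y) -> 0 < PrL0given p f y) ->
  susp p f = Fin (wsum (fun y => Pr p (fun w => f w == y))
                       (fun y => - log2 (PrL0given p f y))).
Proof.
move=> L0_pos; apply: ER_sum_fin => y.
case: Rlt_dec => [y_pos|] //=.
by rewrite /susp_at; case: Rlt_dec => //= /(_ (L0_pos y y_pos)).
Qed.

Lemma susp_infinite {Y : finType} (f : Omega X T M -> Y) (y : Y) :
  0 < Pr p (fun w => f w == y) -> ~ 0 < PrL0given p f y -> susp p f = PInf.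
Proof.
move=> y_pos L0_not_pos; apply: (ER_sum_inf _ y).
by case: Rlt_dec => //= _; rewrite /susp_at; case: Rlt_dec.
Qed.

Hypothesis p_pmf : is_pmf p.

Lemma Pr_ge0 (E : pred (Omega X T M)) : 0 <= Pr p E.
Proof.
rewrite /Pr big_mkcond; apply: sum_ge0 => w.
by case: (E w); [exact: p_pmf.1 | lra].
Qed.

Lemma Pr_mono (E E' : pred (Omega X T M)) :
  (forall w, E w -> E' w) -> Pr p E <= Pr p E'.
Proof.
move=> EE'; rewrite /Pr [X in X <= _]big_mkcond [X in _ <= X]big_mkcond.
apply: sum_le => w; have := p_pmf.1 w.
by case E_w: (E w); rewrite ?(EE' w E_w) //; case: (E' w); lra.
Qed.

Lemma Pr_pos_mono {E E' : pred (Omega X T M)} :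
  0 < Pr p E -> (forall w, E w -> E' w) -> 0 < Pr p E'.
Proof. by move=> E_gt0 EE'; exact: Rlt_le_trans _ _ _ E_gt0 (Pr_mono _ _ EE'). Qed.

Lemma Pr_total {Y : finType} (f : Omega X T M -> Y) (E : pred (Omega X T M)) :
  \big[Rplus/0]_y Pr p (fun w => E w && (f w == y)) = Pr p E.
Proof. by rewrite /Pr (partition_big f xpredT). Qed.

Lemma Pr_total1 {Y : finType} (f : Omega X T M -> Y) :
  \big[Rplus/0]_y Pr p (fun w => f w == y) = 1.
Proof. by rewrite (Pr_total f xpredT); exact: p_pmf.2. Qed.

End Probability.

Ltac decide_events :=
  let w := fresh "w" in
  move=> w; rewrite ?xpair_eqE; case: (rvL w); by do ! case: (_ == _).

Section Leakage.
Context {X T M : finType} (p : Omega X T M -> R).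
Hypothesis p_pmf : is_pmf p.

Definition pXTM x t m := Pr p (fun w => (rvX w == x) && (rvT w == t) && (rvM w == m)).
Definition pXT x t := Pr p (fun w => (rvX w == x) && (rvT w == t)).
Definition pTM t m := Pr p (fun w => (rvT w == t) && (rvM w == m)).
Definition pT t := Pr p (fun w => rvT w == t).
Definition pXTM0 x t m :=
  Pr p (fun w => (rvX w == x) && (rvT w == t) && (rvM w == m) && ~~ rvL w).
Definition pXT0 x t := Pr p (fun w => (rvX w == x) && (rvT w == t) && ~~ rvL w).
Definition pTM0 t m := Pr p (fun w => (rvT w == t) && (rvM w == m) && ~~ rvL w).
Definition pT0 t := Pr p (fun w => (rvT w == t) && ~~ rvL w).

Definition joint (v : X * T * M) : R := pXTM v.1.1 v.1.2 v.2.

Lemma marginals_pos {x : X} {t : T} {m : M} : 0 < pXTM0 x t m ->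
  [/\ 0 < pXTM x t m, 0 < pXT x t, 0 < pTM t m & 0 < pT t].
Proof.
by move=> q0_gt0; split; apply: (Pr_pos_mono p_pmf q0_gt0); decide_events.
Qed.

Lemma marginals0_pos {x : X} {t : T} {m : M} : 0 < pXTM0 x t m ->
  [/\ 0 < pXT0 x t, 0 < pTM0 t m & 0 < pT0 t].
Proof.
by move=> q0_gt0; split; apply: (Pr_pos_mono p_pmf q0_gt0); decide_events.
Qed.

Lemma sum_pXTM_M x t : \big[Rplus/0]_m pXTM x t m = pXT x t.
Proof. by rewrite /pXT -(Pr_total (@rvM X T M)). Qed.

Lemma sum_pXTM_X t m : \big[Rplus/0]_x pXTM x t m = pTM t m.
Proof.
rewrite /pTM -(Pr_total (@rvX X T M)).
by apply: eq_bigr => x _; apply: Pr_ext; decide_events.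
Qed.

Lemma sum_pTM0 t : \big[Rplus/0]_m pTM0 t m = pT0 t.
Proof.
rewrite /pT0 -(Pr_total (@rvM X T M)).
by apply: eq_bigr => m _; apply: Pr_ext; decide_events.
Qed.

Lemma sum_pT : \big[Rplus/0]_t pT t = 1.
Proof. exact: (Pr_total1 p_pmf (@rvT X T M)). Qed.

Lemma sum_joint : \big[Rplus/0]_v joint v = 1.
Proof.
rewrite -(Pr_total1 p_pmf (fun w => (rvX w, rvT w, rvM w))).
by apply: eq_bigr => [[[x t] m]] _; apply: Pr_ext; decide_events.
Qed.

Hypothesis msg_indep : forall t : T,
  0 < Pr p (fun w => rvT w == t) ->
  forall (x : X) (m : M),
    cPr p (fun w => (rvX w == x) && (rvM w == m)) (fun w => (rvT w == t) && ~~ rvL w)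
    = cPr p (fun w => rvX w == x) (fun w => (rvT w == t) && ~~ rvL w)
      * cPr p (fun w => rvM w == m) (fun w => (rvT w == t) && ~~ rvL w).

Lemma indep_factor {x : X} {t : T} {m : M} : 0 < pXTM0 x t m ->
  pXTM0 x t m * pT0 t = pXT0 x t * pTM0 t m.
Proof.
move=> q0_gt0.
have [_ _ _ pT_gt0] := marginals_pos q0_gt0.
have [_ _ pT0_gt0] := marginals0_pos q0_gt0.
have := msg_indep t pT_gt0 x m; rewrite /cPr -/(pT0 t).
have -> : Pr p (fun w => (rvX w == x) && (rvM w == m) && ((rvT w == t) && ~~ rvL w))
          = pXTM0 x t m by apply: Pr_ext; decide_events.
have -> : Pr p (fun w => (rvX w == x) && ((rvT w == t) && ~~ rvL w)) = pXT0 x t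
  by apply: Pr_ext; decide_events.
have -> : Pr p (fun w => (rvM w == m) && ((rvT w == t) && ~~ rvL w)) = pTM0 t m
  by apply: Pr_ext; decide_events.
move=> cond_eq.
have -> : pXTM0 x t m = pT0 t * (pXTM0 x t m / pT0 t) by field; lra.
by rewrite cond_eq; field; lra.
Qed.

Definition ref x t m : R := pT t * (pTM0 t m / pT0 t) * (pXTM x t m / pTM t m).

Lemma ref_ge0 x t m : 0 <= ref x t m.
Proof.
have Pr_nn E := Pr_ge0 p_pmf E.
by apply: Rmult_le_pos; [apply: Rmult_le_pos|]; try apply: div_ge0; apply: Pr_nn.
Qed.

Lemma ref_pos {x : X} {t : T} {m : M} : 0 < pXTM0 x t m -> 0 < ref x t m.
Proof.
move=> q0_gt0.
have [q_gt0 _ pTM_gt0 pT_gt0] := marginals_pos q0_gt0.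
have [_ pTM0_gt0 pT0_gt0] := marginals0_pos q0_gt0.
by apply: Rmult_lt_0_compat; [apply: Rmult_lt_0_compat|];
  try apply: Rdiv_lt_0_compat.
Qed.

(* r has total mass at most 1: summing out x, then m, leaves at most q(t). *)
Lemma ref_total : \big[Rplus/0]_v ref v.1.1 v.1.2 v.2 <= 1.
Proof.
rewrite sum_triple -sum_pT; apply: sum_le => t.
have coef_ge0 m : 0 <= pT t * (pTM0 t m / pT0 t).
  by apply: Rmult_le_pos; last apply: div_ge0; apply: (Pr_ge0 p_pmf).
have sum_x m : \big[Rplus/0]_x ref x t m <= pT t * (pTM0 t m / pT0 t).
  rewrite (eq_bigr (fun x => pT t * (pTM0 t m / pT0 t) / pTM t m * pXTM x t m));
    last by move=> x _; rewrite /ref /Rdiv; ring.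
  rewrite sum_mulr sum_pXTM_X.
  have := div_self_bounds (pTM t m); have := coef_ge0 m; rewrite /Rdiv; nra.
apply: Rle_trans (sum_le _ _ sum_x) _.
rewrite (eq_bigr (fun m => pT t / pT0 t * pTM0 t m));
  last by move=> m _; rewrite /Rdiv; ring.
rewrite sum_mulr sum_pTM0.
have := div_self_bounds (pT0 t); have : 0 <= pT t := Pr_ge0 p_pmf _.
rewrite /Rdiv; nra.
Qed.

Definition susp_XTM_at (v : X * T * M) : R :=
  - log2 (pXTM0 v.1.1 v.1.2 v.2 / joint v).
Definition susp_XT_at (v : X * T * M) : R :=
  - log2 (pXT0 v.1.1 v.1.2 / pXT v.1.1 v.1.2).
Definition info_at (v : X * T * M) : R :=
  log2 (joint v * pT v.1.2 / (pXT v.1.1 v.1.2 * pTM v.1.2 v.2)).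
Definition kl_at (v : X * T * M) : R := log2 (joint v / ref v.1.1 v.1.2 v.2).

(* Key identity: the suspicion added by the message is the information it
   carries plus a log-likelihood ratio; independence enters through
   q0 = q0(x,t) q0(t,m) / q0(t). *)
Lemma suspicion_split (v : X * T * M) : 0 < pXTM0 v.1.1 v.1.2 v.2 ->
  susp_XTM_at v = susp_XT_at v + info_at v + kl_at v.
Proof.
case: v => [[x t] m] /= q0_gt0.
have [q_gt0 pXT_gt0 pTM_gt0 pT_gt0] := marginals_pos q0_gt0.
have [pXT0_gt0 pTM0_gt0 pT0_gt0] := marginals0_pos q0_gt0.
have ref_gt0 := ref_pos q0_gt0.
have q0_eq : pXTM0 x t m = pXT0 x t * pTM0 t m / pT0 t.
  by rewrite -indep_factor //; field; lra.
rewrite /susp_XTM_at /susp_XT_at /info_at /kl_at /joint /=.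
rewrite !log2_inv_ratio // -!log2_mult;
  try by repeat first [assumption | apply: Rdiv_lt_0_compat | apply: Rmult_lt_0_compat].
congr log2; rewrite q0_eq /ref; field; repeat split; lra.
Qed.

Lemma Pr_XTM_pair (y : X * (T * M)) :
  Pr p (fun w => (rvX w, (rvT w, rvM w)) == y) = pXTM y.1 y.2.1 y.2.2.
Proof. by case: y => x [t m]; apply: Pr_ext; decide_events. Qed.

Lemma PrL0_XTM_pair (y : X * (T * M)) :
  PrL0given p (fun w => (rvX w, (rvT w, rvM w))) y
  = pXTM0 y.1 y.2.1 y.2.2 / pXTM y.1 y.2.1 y.2.2.
Proof.
rewrite /PrL0given /cPr Pr_XTM_pair; congr (_ / _).
by case: y => x [t m]; apply: Pr_ext; decide_events.
Qed.

Lemma susp_XTM_infinite x t m :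
  0 < pXTM x t m -> ~ 0 < pXTM0 x t m ->
  susp p (fun w => (rvX w, (rvT w, rvM w))) = PInf.
Proof.
move=> q_gt0 q0_not_gt0; apply: (susp_infinite _ (x, (t, m))).
  by rewrite Pr_XTM_pair.
rewrite PrL0_XTM_pair /= => ratio_gt0; apply: q0_not_gt0.
have -> : pXTM0 x t m = pXTM0 x t m / pXTM x t m * pXTM x t m by field; lra.
exact: Rmult_lt_0_compat.
Qed.

Lemma susp_XTM :
  (forall x t m, 0 < pXTM x t m -> 0 < pXTM0 x t m) ->
  susp p (fun w => (rvX w, (rvT w, rvM w))) = Fin (wsum joint susp_XTM_at).
Proof.
move=> no_inf; rewrite susp_finite; last first.
  move=> [x [t m]]; rewrite Pr_XTM_pair PrL0_XTM_pair => q_gt0.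
  exact: Rdiv_lt_0_compat (no_inf _ _ _ q_gt0) q_gt0.
congr Fin; rewrite /wsum sum_reassoc.
by apply: eq_bigr => [[[x t] m]] _; rewrite Pr_XTM_pair PrL0_XTM_pair.
Qed.

(* susp(X, T^{k-1}) is finite by hypothesis, and as a weighted sum it can be
   spread over the finer support of (X, T^{k-1}, T_k). *)
Lemma susp_XT :
  (forall x t, 0 < Pr p (fun w => (rvX w == x) && (rvT w == t)) ->
     0 < PrL0given p (fun w => (rvX w, rvT w)) (x, t)) ->
  susp p (fun w => (rvX w, rvT w)) = Fin (wsum joint susp_XT_at).
Proof.
move=> L0_pos.
have Pr_XT (u : X * T) : Pr p (fun w => (rvX w, rvT w) == u) = pXT u.1 u.2.
  by case: u => x t; apply: Pr_ext; decide_events.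
have L0_XT (u : X * T) :
    PrL0given p (fun w => (rvX w, rvT w)) u = pXT0 u.1 u.2 / pXT u.1 u.2.
  rewrite /PrL0given /cPr Pr_XT; congr (_ / _).
  by case: u => x t; apply: Pr_ext; decide_events.
rewrite susp_finite; last by move=> [x t]; rewrite Pr_XT; exact: L0_pos.
congr Fin; rewrite (wsum_eq _ (fun u => pXT u.1 u.2)
                            _ (fun u => - log2 (pXT0 u.1 u.2 / pXT u.1 u.2))) //;
  last by move=> u _; rewrite L0_XT.
apply: (wsum_marginal _ joint) => [v|[x t]]; first exact: (Pr_ge0 p_pmf).
by rewrite sum_pXTM_M.
Qed.

Lemma cmi_eq : cond_mutual_info p = wsum joint info_at.
Proof. by apply: eq_bigr => [[[x t] m]] _. Qed.

Lemma suspicion_gain (no_inf : forall x t m, 0 < pXTM x t m -> 0 < pXTM0 x t m) :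
  wsum joint susp_XTM_at
  = wsum joint susp_XT_at + wsum joint info_at + wsum joint kl_at.
Proof.
rewrite -!wsum_add; apply: wsum_eq => // -[[x t] m] /no_inf q0_gt0.
exact: suspicion_split.
Qed.

Lemma kl_ge0 (no_inf : forall x t m, 0 < pXTM x t m -> 0 < pXTM0 x t m) :
  0 <= wsum joint kl_at.
Proof.
apply: gibbs => [v|[[x t] m] /no_inf /ref_pos //|]; first exact: ref_ge0.
by rewrite sum_joint; exact: ref_total.
Qed.

End Leakage.

Theorem corollary3p2 (X T M : finType) (p : Omega X T M -> R)
  (Hp : is_pmf p)
  (Hindep : forall t : T,
     0 < Pr p (fun w => rvT w == t) ->
     forall (x : X) (m : M),
       cPr p (fun w => (rvX w == x) && (rvM w == m))
             (fun w => (rvT w == t) && ~~ rvL w)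
       = cPr p (fun w => rvX w == x) (fun w => (rvT w == t) && ~~ rvL w)
         * cPr p (fun w => rvM w == m) (fun w => (rvT w == t) && ~~ rvL w))
  (Hpos : forall (x : X) (t : T),
     0 < Pr p (fun w => (rvX w == x) && (rvT w == t)) ->
     0 < PrL0given p (fun w => (rvX w, rvT w)) (x, t)) :
  ER_le (Fin (cond_mutual_info p))
        (ER_sub (susp p (fun w => (rvX w, (rvT w, rvM w))))
                (susp p (fun w => (rvX w, rvT w)))).
Proof.
rewrite (susp_XT p Hp Hpos).
case: (classic (exists x t m, 0 < pXTM p x t m /\ ~ 0 < pXTM0 p x t m)) =>
  [[x [t [m [q_gt0 q0_not_gt0]]]] | no_witness].
  by rewrite (susp_XTM_infinite p x t m q_gt0 q0_not_gt0).
have no_inf x t m : 0 < pXTM p x t m -> 0 < pXTM0 p x t m.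
  by move=> q_gt0; apply: NNPP => q0_not_gt0; apply: no_witness; exists x, t, m.
rewrite (susp_XTM p no_inf) (cmi_eq p) /= (suspicion_gain p Hp Hindep no_inf).
have := kl_ge0 p Hp no_inf; lra.
Qed.
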